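(* If a Collatz trajectory $(n,C(n),C^2(n),\dots)$, $n\in\mathbb{N}^+$, does not contain $1$, then for every $r\in\{2,3,4,6\}$ it contains some element congruent to $r$ modulo $8$.
   Context: $C:\mathbb{N}^+\to\mathbb{N}^+$ is the Collatz function $C(n)=n/2$ for $n$ even and $C(n)=3n+1$ for $n$ odd. *)

From mathcomp Require Import all_boot.

Definition collatz (n : nat) : nat := if odd n then 3 * n + 1 else n %/ 2.

From mathcomp Require Import all_boot.
From mathcomp Require Import zify.

(* Write [visits d r m] when some iterate of [m] is congruent to [r] modulo
   [d]; visiting is inherited backwards along the trajectory.
   1. Descent: a positive trajectory avoiding 1 reaches a number = 3 (mod 4),
      since even numbers halve and numbers = 1 (mod 4) other than 1 shrink
      after three steps to (3m+1)/4.
   2. If x = 7 (mod 8) then C^2(x) = (3x+1)/2 satisfies C^2(x)+1 = 3(x+1)/2,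
      so the 2-adic valuation of x+1 drops; hence x = 3 (mod 4) leads to a
      number = 3 (mod 8).
   3. From z = 3 (mod 8): C(z) = 2 (mod 8), and C^3(z) = 0 (mod 4), whose
      halvings reach a number = 4 (mod 8).
   4. Applying step 1 to C(n) gives y with C(y) = 3 (mod 4), forcing
      y = 6 (mod 8). *)

Lemma collatz_even x : x %% 2 = 0 -> collatz x = x %/ 2.
Proof. by rewrite /collatz modn2; case: (odd x). Qed.

Lemma collatz_odd x : x %% 2 = 1 -> collatz x = 3 * x + 1.
Proof. by rewrite /collatz modn2; case: (odd x). Qed.

Lemma iter_collatz_pos k m : 0 < m -> 0 < iter k collatz m.
Proof.
move=> m_gt0; elim: k => [|k IHk] //=.
case: (boolP (iter k collatz m %% 2 == 0)) => /eqP par.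
- by rewrite collatz_even //; lia.
- by rewrite collatz_odd; lia.
Qed.

Definition avoids_one (m : nat) : Prop := forall k, iter k collatz m <> 1.

Lemma avoids_one_iter j m : avoids_one m -> avoids_one (iter j collatz m).
Proof. by move=> av k; rewrite -iterD; apply: av. Qed.

Definition visits (d r m : nat) : Prop :=
  exists k, iter k collatz m = r %[mod d].

Lemma visits_iter d r j m : visits d r (iter j collatz m) -> visits d r m.
Proof. by case=> k hk; exists (k + j); rewrite iterD. Qed.
Arguments visits_iter {d r} j {m}.

Lemma visits_3_mod4 m : 0 < m -> avoids_one m -> visits 4 3 m.
Proof.
elim/ltn_ind: m => m IHm m_gt0 av.
have m_neq1 : m <> 1 by apply: (av 0).
case: (boolP (m %% 4 == 3)) => [/eqP m3|/eqP m_n3]; first by exists 0.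
case: (boolP (m %% 2 == 0)) => /eqP par.
- have halve : iter 1 collatz m = m %/ 2 by rewrite /= collatz_even.
  apply: (visits_iter 1); rewrite halve.
  by apply: IHm; [lia | lia | rewrite -halve; apply: avoids_one_iter].
- have quarter : iter 3 collatz m = (3 * m + 1) %/ 4.
    rewrite /= (collatz_odd m) ?(collatz_even (3 * m + 1)); try lia.
    by rewrite collatz_even; lia.
  apply: (visits_iter 3); rewrite quarter.
  by apply: IHm; [lia | lia | rewrite -quarter; apply: avoids_one_iter].
Qed.

Lemma collatz2_7mod8 x : x %% 8 = 7 ->
  let y := iter 2 collatz x in y %% 4 = 3 /\ y.+1 * 2 = 3 * x.+1.
Proof.
move=> x7 /=; rewrite (collatz_odd x); last lia.
by rewrite collatz_even; lia.
Qed.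

(* Induction on a bound [j] for the 2-adic valuation of x+1. *)
Lemma visits_3_mod8_bounded j x :
  x %% 4 = 3 -> ~~ (2 ^ j %| x.+1) -> visits 8 3 x.
Proof.
elim: j x => [|j IHj] x x3 ndvd; first by rewrite expn0 dvd1n in ndvd.
case: (boolP (x %% 8 == 3)) => [/eqP x3mod8|/eqP x_n3]; first by exists 0.
have x7 : x %% 8 = 7 by lia.
have [y3 ysucc] := collatz2_7mod8 x x7.
apply: (visits_iter 2); apply: IHj => //; apply: contra ndvd => dvd_y.
rewrite -(@Gauss_dvdr _ 3) ?coprimeXl // -ysucc.
by rewrite expnS mulnC dvdn_pmul2r.
Qed.

(* The bound 2^(x+1) > x+1 always works. *)
Lemma visits_3_mod8 x : x %% 4 = 3 -> visits 8 3 x.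
Proof.
move=> x3; apply: (visits_3_mod8_bounded x.+1) => //.
apply/negP => /(dvdn_leq (ltn0Sn x)).
by have := ltn_expl x.+1 (isT : 1 < 2); lia.
Qed.

Lemma visits_4_mod8 e : 0 < e -> e %% 4 = 0 -> visits 8 4 e.
Proof.
elim/ltn_ind: e => e IHe e_gt0 e0.
case: (boolP (e %% 8 == 4)) => [/eqP e4|/eqP e_n4]; first by exists 0.
apply: (visits_iter 1); rewrite /= collatz_even; last lia.
by apply: IHe; lia.
Qed.

(* From z = 3 (mod 8): C(z) = 3z+1 = 2 (mod 8), and
   C^3(z) = 3(3z+1)/2 + 1 = 0 (mod 4). *)
Lemma visits_2_4_of_3_mod8 z : z %% 8 = 3 -> visits 8 2 z /\ visits 8 4 z.
Proof.
move=> z3; split.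
  by exists 1; rewrite /= collatz_odd; lia.
have z1 : collatz z = 3 * z + 1 by rewrite collatz_odd; lia.
have z2 : collatz (3 * z + 1) = (3 * z + 1) %/ 2 by rewrite collatz_even; lia.
apply: (visits_iter 3); apply: visits_4_mod8; rewrite /= z1 z2 collatz_odd; lia.
Qed.

Lemma collatz_3_mod4_pred y : collatz y %% 4 = 3 -> y %% 8 = 6.
Proof.
case: (boolP (y %% 2 == 0)) => /eqP par.
- by rewrite collatz_even //; lia.
- by rewrite collatz_odd; lia.
Qed.

Lemma visits_6_mod8 m : 0 < m -> avoids_one m -> visits 8 6 m.
Proof.
move=> m_gt0 av.
have [k hk] :=
  visits_3_mod4 _ (iter_collatz_pos 1 m m_gt0) (avoids_one_iter 1 m av).
by exists k; apply: collatz_3_mod4_pred; rewrite -iterS -addn1 iterD.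
Qed.

Theorem mainTheorem17 (n : nat) :
  0 < n ->
  (forall k : nat, iter k collatz n <> 1) ->
  forall r : nat, r \in [:: 2; 3; 4; 6] ->
    exists k : nat, iter k collatz n = r %[mod 8].
Proof.
move=> n_gt0 av r; rewrite !inE.
have [j z3] := visits_3_mod4 n n_gt0 av.
have [k z3'] := visits_3_mod8 _ z3.
have [v2 v4] := visits_2_4_of_3_mod8 _ z3'.
case/or4P=> /eqP ->.
- exact: (visits_iter j (visits_iter k v2)).
- by exists (k + j); rewrite iterD.
- exact: (visits_iter j (visits_iter k v4)).
- exact: visits_6_mod8.
Qed.
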